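(* There exists a finite game $G$ such that $\mathcal{X}^{CCE}\not\subseteq\mathcal{X}^{PS\text{-}NF}$, i.e. some coarse correlated equilibrium $x$ of $G$ is not equal to $x_\varnothing$ for any perfectly stable $\mathbf{x}=[x_\pi]$ of the Stackelberg game $(G,N,\emptyset)$.
   Context: A finite game is $G=(N,\{S_p\}_{p\in N},\{u_p\}_{p\in N})$ with players $N=\{1,\dots,n\}$, finite nonempty strategy sets $S_p$, and utilities $u_p:S\to\mathbb{R}$ on $S=\prod_{p\in N}S_p$; write $s=(s_p,s_{-p})$ with $s_{-p}\in S_{-p}=\prod_{q\neq p}S_q$. $\mathcal{X}=\Delta(S)$ is the set of probability distributions on $S$ and $u_p(x)=\sum_{s\in S}x(s)u_p(s)$ for $x\in\mathcal{X}$. For $P\subseteq N$, $\mathcal{X}^{CE}_P$ is the set of $x\in\mathcal{X}$ such that for every $p\in P$ and all $s_p\neq s_p'\in S_p$: $\sum_{s_{-p}\in S_{-p}} x(s_p,s_{-p})\,(u_p(s_p,s_{-p})-u_p(s_p',s_{-p}))\ge 0$; $\mathcal{X}^{CE}=\mathcal{X}^{CE}_N$ is the set of correlated equilibria of $G$. $\mathcal{X}^{CCE}$ is the set of coarse correlated equilibria of $G$: $x\in\mathcal{X}$ with $\sum_{s\in S}x(s)(u_p(s)-u_p(s_p',s_{-p}))\ge 0$ for all $p\in N$, $s_p'\in S_p$. A Stackelberg game (SG) is a triple $(G,L,F)$ with $L\cup F=N$ and $L\cap F=\emptyset$ (leaders and followers). For $P\subseteq N$, $\Pi_P$ is the set of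 ordered subsets of $P$ (finite sequences of pairwise distinct elements of $P$, including the empty sequence $\varnothing$); for $\pi\in\Pi_P$ and $p\in P$ not occurring in $\pi$, $\pi p$ is $\pi$ with $p$ appended; when used as a set, $\pi$ means its set of entries. $\mathbf{X}=\prod_{\pi\in\Pi_L}\mathcal{X}^{CE}_{\pi\cup F}$, with elements $\mathbf{x}=[x_\pi]_{\pi\in\Pi_L}$. For $\mathbf{x}\in\mathbf{X}$ and $\pi\in\Pi_L$, $x_\pi$ is stable if $u_p(x_\pi)\ge u_p(x_{\pi p})$ for all $p\in L\setminus\pi$; $\mathbf{x}$ is stable if $x_\varnothing$ is stable, and perfectly stable if $x_\pi$ is stable for every $\pi\in\Pi_L$; $\mathbf{X}^{S}$ and $\mathbf{X}^{PS}$ denote the sets of stable and perfectly stable elements of $\mathbf{X}$. $\mathcal{X}^{S\text{-}NF}=\{x_\varnothing:\mathbf{x}\in\mathbf{X}^S\}$ and $\mathcal{X}^{PS\text{-}NF}=\{x_\varnothing:\mathbf{x}\in\mathbf{X}^{PS}\}$ computed for the SG $(G,N,\emptyset)$ in which every player is a leader. *)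

From HB Require Import structures.
From mathcomp Require Import all_boot all_order all_algebra.
Set Implicit Arguments. Unset Strict Implicit. Unset Printing Implicit Defensive.
Import Order.TTheory GRing.Theory Num.Theory.
Local Open Scope ring_scope.

(* Strategies of every player are drawn
   from a common finite ambient type T; player p's strategy set is the
   nonempty finite set [strat p].  A strategy profile is an element of
   {ffun 'I_n -> T} whose p-th coordinate lies in [strat p]. *)
Record game (R : realFieldType) := Game {
  nplayers : nat;
  stratT : finType;
  strat : 'I_nplayers -> {set stratT};
  strat_nonempty : forall p, strat p != set0;
  util : 'I_nplayers -> {ffun 'I_nplayers -> stratT} -> R
}.
Arguments strat {R} g p.
Arguments util {R} g p s.
Arguments stratT {R} g.
Arguments nplayers {R} g.

Section Game.
Variables (R : realFieldType) (G : game R).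

Definition player := 'I_(nplayers G).
Definition prof := {ffun player -> stratT G}.

Definition valid (s : prof) : bool := [forall p, s p \in strat G p].

Definition dev (s : prof) (p : player) (a : stratT G) : prof :=
  [ffun q => if q == p then a else s q].

Definition is_dist (x : {ffun prof -> R}) : Prop :=
  (forall s, 0 <= x s) /\ (forall s, ~~ valid s -> x s = 0) /\
  \sum_(s | valid s) x s = 1.

Definition eutil (p : player) (x : {ffun prof -> R}) : R :=
  \sum_(s | valid s) x s * util G p s.

Definition CE_P (P : {set player}) (x : {ffun prof -> R}) : Prop :=
  is_dist x /\
  forall p, p \in P -> forall a b, a \in strat G p -> b \in strat G p -> a != b ->
    0 <= \sum_(s | valid s && (s p == a)) x s * (util G p s - util G p (dev s p b)).

Definition CCE (x : {ffun prof -> R}) : Prop :=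
  is_dist x /\
  forall p b, b \in strat G p ->
    0 <= \sum_(s | valid s) x s * (util G p s - util G p (dev s p b)).

Definition ordsub (L : {set player}) (pi : seq player) : bool :=
  uniq pi && all (fun p => p \in L) pi.

(* bold X: families [x_pi]_{pi in Pi_L}, x_pi in X^CE_{pi u F}.
   Families are represented as functions on all sequences; only the values
   at ordered subsets of L matter. *)
Definition boldX (L F : {set player}) (xb : seq player -> {ffun prof -> R}) : Prop :=
  forall pi, ordsub L pi -> CE_P ([set p in pi] :|: F) (xb pi).

Definition stable_at (L : {set player}) (xb : seq player -> {ffun prof -> R})
  (pi : seq player) : Prop :=
  forall p, p \in L -> p \notin pi -> eutil p (xb (rcons pi p)) <= eutil p (xb pi).

Definition perfectly_stable (L F : {set player}) xb : Prop :=
  boldX L F xb /\ forall pi, ordsub L pi -> stable_at L xb pi.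

Definition PS_NF (x : {ffun prof -> R}) : Prop :=
  exists xb, perfectly_stable [set: player] set0 xb /\ xb [::] = x.

End Game.

From HB Require Import structures.
From mathcomp Require Import all_boot all_order all_algebra.
From mathcomp Require Import lra.
Set Implicit Arguments. Unset Strict Implicit. Unset Printing Implicit Defensive.
Import Order.TTheory GRing.Theory Num.Theory.
Local Open Scope ring_scope.

(* General fact: if a distribution satisfies the correlated-equilibrium
   constraint of player p for the recommendation a against the deviation b,
   then it puts no mass on profiles recommending a where b is strictly
   better for p (iterated strict dominance "on the support").

   The counterexample is a 3x3 bimatrix game G (row player 0, column
   player 1).  Iterated dominance shows that every correlated equilibrium
   of G gives the column player exactly 3, and that every distribution
   obeying only the row player's constraints and giving the column player
   at least 3 gives the row player exactly 3.  The CCE xx, uniform on the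
   profiles (0,0), (1,1), (2,0), gives the row player only 5/3.  In a
   perfectly stable family, stability at [::] and at [:: 0] yields
     u_0(x_[0]) <= u_0(xx) = 5/3   and   u_1(x_[0]) >= u_1(x_[0,1]) = 3,
   so u_0(x_[0]) = 3 > 5/3, a contradiction. *)

Section Dominance.
Variables (R : realFieldType) (G : game R).

Lemma dominated_null (x : {ffun prof G -> R}) (p : player G) (a b : stratT G) :
  (forall s, 0 <= x s) ->
  0 <= \sum_(s | valid s && (s p == a)) x s * (util G p s - util G p (dev s p b)) ->
  (forall s, valid s && (s p == a) -> x s != 0 ->
     util G p s < util G p (dev s p b)) ->
  forall s, valid s && (s p == a) -> x s = 0.
Proof.
move=> x_ge0 hCE hdom.
pose loss s := x s * (util G p (dev s p b) - util G p s).
have loss_ge0 s : valid s && (s p == a) -> 0 <= loss s.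
  move=> hs; rewrite /loss; have [->|xs_neq0] := eqVneq (x s) 0; first by rewrite mul0r.
  by rewrite mulr_ge0 // subr_ge0 ltW // hdom.
have loss_sum0 : \sum_(s | valid s && (s p == a)) loss s = 0.
  apply/eqP; rewrite eq_le sumr_ge0 // andbT.
  rewrite -oppr_ge0 -sumrN; apply: le_trans hCE _; apply/ler_sum => s _.
  by rewrite /loss -mulrN opprB.
move=> s hs; apply/eqP/negPn/negP => xs_neq0.
have /eqP := (psumr_eq0P loss_ge0 loss_sum0) s hs.
by rewrite /loss mulf_eq0 (negPf xs_neq0) subr_eq0 eq_sym (lt_eqF (hdom s hs xs_neq0)).
Qed.

End Dominance.

Section Counterexample.
Variable R : realFieldType.

Definition c0 : 'I_3 := @Ordinal 3 0 isT.
Definition c1 : 'I_3 := @Ordinal 3 1 isT.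
Definition c2 : 'I_3 := @Ordinal 3 2 isT.

(* Payoff bimatrix; rows are the row player's strategies.
     row player:      column player:
       2 1 4            2 3 1
       1 3 0            2 3 1
       0 0 1            4 2 0            *)
Definition payoff (p : 'I_2) (a b : 'I_3) : R :=
  (nth 0 (nth [::] (if p == ord0 then [:: [:: 2; 1; 4]; [:: 1; 3; 0]; [:: 0; 0; 1]]
                    else [:: [:: 2; 3; 1]; [:: 2; 3; 1]; [:: 4; 2; 0]]) a) b)%N%:R.

Lemma strat_setT_nonempty (p : 'I_2) : [set: 'I_3] != set0.
Proof. by apply/set0Pn; exists c0. Qed.

Definition G : game R :=
  @Game R 2 (ordinal 3) (fun _ => setT) strat_setT_nonempty
    (fun p s => payoff p (s ord0) (s ord_max)).

Definition row : player G := ord0.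
Definition col : player G := ord_max.

Definition profile (a b : 'I_3) : prof G := [ffun i => if i == row then a else b].

Lemma profile_row a b : profile a b row = a.
Proof. by rewrite ffunE. Qed.

Lemma profile_col a b : profile a b col = b.
Proof. by rewrite ffunE. Qed.

Lemma profileK (s : prof G) : profile (s row) (s col) = s.
Proof.
by apply/ffunP=> -[[|[|//]] i_lt2]; rewrite ffunE //; congr (s _); apply/val_inj.
Qed.

Lemma util_profile p a b : util G p (profile a b) = payoff p a b.
Proof. by rewrite /= profile_row profile_col. Qed.

Lemma dev_row a b a' : dev (profile a b) row a' = profile a' b.
Proof. by apply/ffunP=> i; rewrite !ffunE; case: ifP => // ->. Qed.

Lemma dev_col a b b' : dev (profile a b) col b' = profile a b'.
Proof. by apply/ffunP=> -[[|[|//]] i_lt2]; rewrite !ffunE. Qed.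

Lemma player_cases (p : player G) : p = row \/ p = col.
Proof. by case: p => -[|[|//]] p_lt2; [left|right]; apply: val_inj. Qed.

Lemma valid_all (s : prof G) : valid s.
Proof. by apply/forallP=> p; rewrite in_setT. Qed.

Lemma ord3_cases (a : 'I_3) : [\/ a = c0, a = c1 | a = c2].
Proof.
by case: a => -[|[|[|//]]] a_lt3; [constructor 1|constructor 2|constructor 3];
  apply: val_inj.
Qed.

Lemma sum_I3 (g : 'I_3 -> R) : \sum_(a : 'I_3) g a = g c0 + g c1 + g c2.
Proof.
by rewrite !big_ord_recr big_ord0 /= add0r; congr (g _ + g _ + g _); apply/val_inj.
Qed.

Lemma sum_valid (F : prof G -> R) :
  \sum_(s | valid s) F s = \sum_(a : 'I_3) \sum_(b : 'I_3) F (profile a b).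
Proof.
rewrite (eq_bigl xpredT) => [|s]; last by rewrite valid_all.
rewrite pair_big /= (reindex (fun ab : 'I_3 * 'I_3 => profile ab.1 ab.2)) //=.
by exists (fun s => (s row, s col)) => [[a b] _|s _];
  rewrite ?profile_row ?profile_col ?profileK.
Qed.

Lemma eutilE (p : player G) (x : {ffun prof G -> R}) :
  eutil p x = \sum_(a : 'I_3) \sum_(b : 'I_3) x (profile a b) * payoff p a b.
Proof.
rewrite /eutil sum_valid; apply: eq_bigr => a _; apply: eq_bigr => b _.
by rewrite util_profile.
Qed.

Lemma mass1 (x : {ffun prof G -> R}) : is_dist x ->
  \sum_(a : 'I_3) \sum_(b : 'I_3) x (profile a b) = 1.
Proof. by case=> _ [_ <-]; rewrite sum_valid. Qed.

Lemma row_null (P : {set player G}) (x : {ffun prof G -> R}) (a a' : 'I_3) :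
  CE_P P x -> row \in P -> a != a' ->
  (forall b, x (profile a b) != 0 -> payoff row a b < payoff row a' b) ->
  forall b, x (profile a b) = 0.
Proof.
move=> [[x_ge0 _] hCE] rowP neq_aa' hdom b.
apply: (dominated_null x_ge0 (hCE _ rowP a a' (in_setT _) (in_setT _) neq_aa')).
  move=> s /andP[_ /eqP sa]; rewrite -(profileK s) sa dev_row !util_profile.
  exact: hdom.
by rewrite valid_all profile_row /=.
Qed.

Lemma col_null (P : {set player G}) (x : {ffun prof G -> R}) (b b' : 'I_3) :
  CE_P P x -> col \in P -> b != b' ->
  (forall a, x (profile a b) != 0 -> payoff col a b < payoff col a b') ->
  forall a, x (profile a b) = 0.
Proof.
move=> [[x_ge0 _] hCE] colP neq_bb' hdom a.
apply: (dominated_null x_ge0 (hCE _ colP b b' (in_setT _) (in_setT _) neq_bb')).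
  move=> s /andP[_ /eqP sb]; rewrite -(profileK s) sb dev_col !util_profile.
  exact: hdom.
by rewrite valid_all profile_col /=.
Qed.

(* Row 2 is strictly dominated by row 0 for the row player. *)
Lemma row2_null (P : {set player G}) (x : {ffun prof G -> R}) :
  CE_P P x -> row \in P -> forall b, x (profile c2 b) = 0.
Proof.
move=> hCE rowP; apply: (row_null hCE rowP (a' := c0)) => // b _.
by case: (ord3_cases b) => ->; rewrite /payoff /= ltr_nat.
Qed.

(* Column 2 is strictly dominated by column 1 for the column player. *)
Lemma col2_null (P : {set player G}) (x : {ffun prof G -> R}) :
  CE_P P x -> col \in P -> forall a, x (profile a c2) = 0.
Proof.
move=> hCE colP; apply: (col_null hCE colP (b' := c1)) => // a _.
by case: (ord3_cases a) => ->; rewrite /payoff /= ltr_nat.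
Qed.

(* Once row 2 is eliminated, column 0 is strictly dominated by column 1. *)
Lemma col0_null (P : {set player G}) (x : {ffun prof G -> R}) :
  CE_P P x -> row \in P -> col \in P -> forall a, x (profile a c0) = 0.
Proof.
move=> hCE rowP colP; apply: (col_null hCE colP (b' := c1)) => // a.
by case: (ord3_cases a) => ->; rewrite ?(row2_null hCE rowP) ?eqxx // /payoff /= ltr_nat.
Qed.

(* Every correlated equilibrium of G gives the column player exactly 3:
   it is concentrated on the rows 0, 1 and the column 1. *)
Lemma CE_col_payoff (P : {set player G}) (z : {ffun prof G -> R}) :
  CE_P P z -> row \in P -> col \in P -> eutil col z = 3.
Proof.
move=> hCE rowP colP; have := mass1 hCE.1.
rewrite eutilE !sum_I3 !(row2_null hCE rowP) !(col2_null hCE colP).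
rewrite !(col0_null hCE rowP colP) /payoff /=; lra.
Qed.

(* A distribution obeying only the row player's constraints and paying the
   column player at least 3 is concentrated on (1,1), so it pays the row
   player 3. *)
Lemma CE_row_payoff (P : {set player G}) (y : {ffun prof G -> R}) :
  CE_P P y -> row \in P -> 3 <= eutil col y -> eutil row y = 3.
Proof.
move=> hCE rowP col_ge3; have [[y_ge0 _] _] := hCE; have mass := mass1 hCE.1.
(* Off row 2 the column player gets at most 3, and exactly 3 only in column 1. *)
have [y00 y10 y02 y12] : [/\ y (profile c0 c0) = 0, y (profile c1 c0) = 0,
                             y (profile c0 c2) = 0 & y (profile c1 c2) = 0].
  move: col_ge3 mass; rewrite eutilE !sum_I3 !(row2_null hCE rowP) /payoff /=.
  have := y_ge0 (profile c0 c0); have := y_ge0 (profile c1 c0).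
  have := y_ge0 (profile c0 c2); have := y_ge0 (profile c1 c2).
  by move=> *; split; lra.
(* Within column 1, row 0 is strictly dominated by row 1. *)
have row0_null : forall b, y (profile c0 b) = 0.
  apply: (row_null hCE rowP (a' := c1)) => // b.
  by case: (ord3_cases b) => ->; rewrite ?y00 ?y02 ?eqxx // /payoff /= ltr_nat.
move: mass; rewrite eutilE !sum_I3 !(row2_null hCE rowP) !row0_null y10 y12 /payoff /=.
lra.
Qed.

Definition xx : {ffun prof G -> R} :=
  [ffun s : prof G =>
     if (s row, s col) \in [:: (c0, c0); (c1, c1); (c2, c0)] then 3^-1 else 0].

Lemma xx_profile a b :
  xx (profile a b) = if (a, b) \in [:: (c0, c0); (c1, c1); (c2, c0)] then 3^-1 else 0.
Proof. by rewrite ffunE profile_row profile_col. Qed.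

Lemma xx_CCE : CCE xx.
Proof.
split; [split; [|split]|].
- by move=> s; rewrite ffunE; case: ifP; rewrite ?invr_ge0 ?ler0n.
- by move=> s; rewrite valid_all.
- by rewrite sum_valid !sum_I3 !xx_profile /=; lra.
move=> p b _; rewrite sum_valid !sum_I3.
by case: (player_cases p) => ->; case: (ord3_cases b) => ->;
  rewrite ?dev_row ?dev_col !util_profile !xx_profile /payoff /=; lra.
Qed.

Lemma xx_row_payoff : eutil row xx = 5 / 3.
Proof. by rewrite eutilE !sum_I3 !xx_profile /payoff /=; lra. Qed.

End Counterexample.

Theorem mainTheorem16 (R : realFieldType) :
  exists G : game R, exists x : {ffun prof G -> R}, CCE x /\ ~ PS_NF x.
Proof.
exists (G R), (xx R); split; first exact: xx_CCE.
move=> [xb [[hX hS] root_xx]].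
have lead_row : ordsub [set: player (G R)] [:: row R] by rewrite /ordsub /= in_setT.
have lead_row_col : ordsub [set: player (G R)] [:: row R; col R].
  by rewrite /ordsub /= !in_setT.
have y_CE := hX _ lead_row; have z_CE := hX _ lead_row_col.
(* Stability: the row player gains nothing by leading first, and the column
   player nothing by leading second. *)
have row_stable := hS [::] isT (row R) (in_setT _) isT.
have col_stable := hS _ lead_row (col R) (in_setT _) isT.
rewrite /= root_xx xx_row_payoff in row_stable.
rewrite /= (CE_col_payoff z_CE) ?inE // in col_stable.
have row_in : row R \in [set p in [:: row R]] :|: set0 by rewrite !inE.
have := CE_row_payoff y_CE row_in col_stable; lra.
Qed.
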